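(* Let $(G,\cdot)$ be a group and let $\psi\in\operatorname{End}(G,\cdot)$. Consider the subset $$N=\{\,\nu(g):g\in G\,\},\qquad \nu(g)\colon h\mapsto g\cdot\psi(g)\cdot h\cdot\psi(g)^{-1},$$ of $\operatorname{Perm}(G)$, and define $g\circ h=g\cdot\psi(g)\cdot h\cdot\psi(g)^{-1}$ for $g,h\in G$. (1) The following are equivalent: (a) $N$ is a subgroup of $\operatorname{Perm}(G)$; (b) $N$ is a regular subgroup of $\operatorname{Perm}(G)$ which normalises $\lambda(G)$; (c) $\psi([\psi(G),G])\le Z(G,\cdot)$; (d) $(G,\cdot,\circ)$ is a skew brace. (2) The following are equivalent: (a) $N$ is a regular subgroup of $\operatorname{Perm}(G)$ which normalises, and is normalised by, $\lambda(G)$; (b) $\psi([G,G])\le Z(G,\cdot)$; (c) $(G,\cdot,\circ)$ is a bi-skew brace.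
   Context: $\operatorname{Perm}(G)$ denotes the group of all permutations of the underlying set of $G$, and $\lambda\colon G\to\operatorname{Perm}(G)$, $\lambda(g)(h)=g\cdot h$, is the left regular representation. A subset $N\subseteq\operatorname{Perm}(G)$ is regular if the map $N\to G$, $\eta\mapsto\eta(1)$, is a bijection. ''$N$ normalises $\lambda(G)$'' means $\eta\lambda(G)\eta^{-1}=\lambda(G)$ for all $\eta\in N$; ''$N$ is normalised by $\lambda(G)$'' means $\lambda(g)N\lambda(g)^{-1}=N$ for all $g\in G$. Commutators are $[x,y]=xyx^{-1}y^{-1}$, and for subgroups $A,B$, $[A,B]$ is the subgroup generated by all $[a,b]$, $a\in A,b\in B$; $\psi(G)$ is the image of $\psi$. $Z(G,\cdot)$ is the centre. A skew (left) brace is a triple $(G,\cdot,\circ)$ where $(G,\cdot)$ and $(G,\circ)$ are groups and $g\circ(h\cdot k)=(g\circ h)\cdot g^{-1}\cdot(g\circ k)$ for all $g,h,k$ (with $g^{-1}$ the inverse in $(G,\cdot)$). A bi-skew brace is a triple $(G,\cdot,\circ)$ such that both $(G,\cdot,\circ)$ and $(G,\circ,\cdot)$ are skew braces. *)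

Set Implicit Arguments.

Section Defs.
Variable G : Type.

Definition is_group (op : G -> G -> G) (e : G) (i : G -> G) : Prop :=
  (forall x y z, op x (op y z) = op (op x y) z) /\
  (forall x, op e x = x /\ op x e = x) /\
  (forall x, op x (i x) = e /\ op (i x) x = e).

Definition is_skew_brace (dot circ : G -> G -> G) : Prop :=
  exists (e : G) (i : G -> G) (e' : G) (i' : G -> G),
    is_group dot e i /\ is_group circ e' i' /\
    (forall g h k, circ g (dot h k) = dot (dot (circ g h) (i g)) (circ g k)).

Definition is_bi_skew_brace (dot circ : G -> G -> G) : Prop :=
  is_skew_brace dot circ /\ is_skew_brace circ dot.

Definition bijective_fun (f : G -> G) : Prop :=
  exists f' : G -> G, (forall x, f' (f x) = x) /\ (forall x, f (f' x) = x).

Definition is_inverse_fun (f f' : G -> G) : Prop :=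
  (forall x, f' (f x) = x) /\ (forall x, f (f' x) = x).

Definition is_perm_subgroup (S : (G -> G) -> Prop) : Prop :=
  (forall f, S f -> bijective_fun f) /\
  S (fun x => x) /\
  (forall f g, S f -> S g -> S (fun x => f (g x))) /\
  (forall f, S f -> forall f', is_inverse_fun f f' -> S f').

(* S is regular: eta |-> eta(1) is a bijection S -> G. *)
Definition is_regular (one : G) (S : (G -> G) -> Prop) : Prop :=
  (forall f g, S f -> S g -> f one = g one -> f = g) /\
  (forall x, exists f, S f /\ f one = x).

Definition lam (mul : G -> G -> G) (g : G) : G -> G := fun h => mul g h.

Definition normalises_lambda (mul : G -> G -> G) (S : (G -> G) -> Prop) : Prop :=
  forall eta, S eta -> forall eta', is_inverse_fun eta eta' ->
    (forall g, exists g', (fun x => eta (lam mul g (eta' x))) = lam mul g') /\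
    (forall g', exists g, (fun x => eta (lam mul g (eta' x))) = lam mul g').

Definition normalised_by_lambda (mul : G -> G -> G) (inv : G -> G)
    (S : (G -> G) -> Prop) : Prop :=
  forall g,
    (forall eta, S eta -> S (fun x => lam mul g (eta (lam mul (inv g) x)))) /\
    (forall eta', S eta' -> exists eta, S eta /\
        eta' = (fun x => lam mul g (eta (lam mul (inv g) x)))).

Inductive gen (mul : G -> G -> G) (one : G) (inv : G -> G) (T : G -> Prop)
  : G -> Prop :=
| gen_one : gen mul one inv T one
| gen_in : forall x, T x -> gen mul one inv T x
| gen_inv : forall x, gen mul one inv T x -> gen mul one inv T (inv x)
| gen_mul : forall x y, gen mul one inv T x -> gen mul one inv T y ->
            gen mul one inv T (mul x y).

Definition commutator (mul : G -> G -> G) (inv : G -> G) (x y : G) : G :=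
  mul (mul (mul x y) (inv x)) (inv y).

Definition comm_subgroup (mul : G -> G -> G) (one : G) (inv : G -> G)
    (A B : G -> Prop) : G -> Prop :=
  gen mul one inv (fun z => exists a b, A a /\ B b /\ z = commutator mul inv a b).

Definition center (mul : G -> G -> G) : G -> Prop :=
  fun z => forall y, mul z y = mul y z.

Definition is_endo (mul : G -> G -> G) (psi : G -> G) : Prop :=
  forall x y, psi (mul x y) = mul (psi x) (psi y).

Definition nu (mul : G -> G -> G) (inv : G -> G) (psi : G -> G) (g : G) : G -> G :=
  fun h => mul (mul (mul g (psi g)) h) (inv (psi g)).

Definition Nset (mul : G -> G -> G) (inv : G -> G) (psi : G -> G) : (G -> G) -> Prop :=
  fun f => exists g, f = nu mul inv psi g.

Definition circ_op (mul : G -> G -> G) (inv : G -> G) (psi : G -> G) : G -> G -> G :=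
  fun g h => nu mul inv psi g h.

End Defs.

From Stdlib Require Import FunctionalExtensionality Setoid.

(* Write c_a(x) = a x a^-1 for conjugation.  Then
     nu(g)(x) = g . c_{psi g}(x),
   so every element of N is a left translation composed with an inner
   automorphism, and two maps  x |-> m . c_a(x)  and  x |-> m . c_b(x)  agree
   iff  b^-1 a  is central.  Every question of the theorem reduces to asking
   whether some map of this shape equals nu(m), where m is forced to be its
   value at 1; that happens iff  c^-1 . psi(m)  is central.  Concretely:
   - nu(g) o nu(h) = nu(g o h)  iff  psi([psi g, h]) is central; this single
     fact gives closure of N, associativity of o, hence all of part (1);
   - lambda(g) nu(k) lambda(g)^-1 lies in N  iff  psi([k^-1,g][g,psi k]) is
     central, which under (1c) is equivalent to psi([G,G]) <= Z(G);
   - the brace identity of (G, o, .) at (g, h) holds  iff  psi([g, h^-1]) is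
     central. *)

Section Group.
Context {G : Type} {mul : G -> G -> G} {one : G} {inv : G -> G}.
Hypothesis HG : is_group mul one inv.

Local Notation "x ** y" := (mul x y) (at level 40, left associativity).

Lemma mulA x y z : (x ** y) ** z = x ** (y ** z).
Proof. destruct HG as [A _]. now rewrite A. Qed.

Lemma mul1g x : one ** x = x.
Proof. apply HG. Qed.

Lemma mulg1 x : x ** one = x.
Proof. apply HG. Qed.

Lemma mulgV x : x ** inv x = one.
Proof. apply HG. Qed.

Lemma mulVg x : inv x ** x = one.
Proof. apply HG. Qed.

Lemma mulKg x y : x ** (inv x ** y) = y.
Proof. now rewrite <- mulA, mulgV, mul1g. Qed.

Lemma mulVKg x y : inv x ** (x ** y) = y.
Proof. now rewrite <- mulA, mulVg, mul1g. Qed.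

Lemma mulg_lcancel a x y : a ** x = a ** y -> x = y.
Proof. intro E. now rewrite <- (mulVKg a x), E, mulVKg. Qed.

Lemma inv_unique x y : x ** y = one -> y = inv x.
Proof. intro E. apply (mulg_lcancel x). now rewrite E, mulgV. Qed.

Lemma invMg x y : inv (x ** y) = inv y ** inv x.
Proof. symmetry. apply inv_unique. now rewrite mulA, mulKg, mulgV. Qed.

Lemma invgK x : inv (inv x) = x.
Proof. symmetry. apply inv_unique, mulVg. Qed.

Lemma inv1g : inv one = one.
Proof. symmetry. apply inv_unique, mul1g. Qed.

Definition conjg (a x : G) : G := a ** x ** inv a.

Lemma conjgM a b x : conjg a (conjg b x) = conjg (a ** b) x.
Proof. unfold conjg. now rewrite invMg, !mulA. Qed.

Lemma conjg_center z x : center mul z -> conjg z x = x.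
Proof. intro Hz. unfold conjg. now rewrite Hz, mulA, mulgV, mulg1. Qed.

Lemma center1 : center mul one.
Proof. intro y. now rewrite mul1g, mulg1. Qed.

Lemma centerV z : center mul z -> center mul (inv z).
Proof.
  intros Hz y. apply (mulg_lcancel z).
  rewrite mulKg, <- mulA, Hz, mulA, mulgV, mulg1. reflexivity.
Qed.

Lemma centerM a b : center mul a -> center mul b -> center mul (a ** b).
Proof. intros Ha Hb y. now rewrite mulA, Hb, <- mulA, Ha, mulA. Qed.

Lemma conjg_fix_center a z : center mul z -> conjg a z = z.
Proof. intro Hz. unfold conjg. now rewrite <- (Hz a), mulA, mulgV, mulg1. Qed.

Lemma center_conjg_iff a z : center mul (conjg a z) <-> center mul z.
Proof.
  split; intro Hz.
  - replace z with (conjg (inv a) (conjg a z)).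
    + now rewrite (conjg_fix_center _ _ Hz).
    + now rewrite conjgM, mulVg; unfold conjg; rewrite inv1g, mul1g, mulg1.
  - now rewrite (conjg_fix_center _ _ Hz).
Qed.

Lemma conjg_ext_iff a b :
  (forall x, conjg a x = conjg b x) <-> center mul (inv b ** a).
Proof.
  split.
  - intros E y.
    transitivity (inv b ** conjg a y ** a).
    + unfold conjg. now rewrite !mulA, mulVg, mulg1.
    + rewrite E. unfold conjg. now rewrite !mulA, mulVKg.
  - intros Hc x. replace a with (b ** (inv b ** a)) by apply mulKg.
    now rewrite <- conjgM, (conjg_center _ _ Hc).
Qed.

Lemma translate_conjg_iff m a b :
  (forall x, m ** conjg a x = m ** conjg b x) <-> center mul (inv b ** a).
Proof.
  rewrite <- conjg_ext_iff. split; intros E x.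
  - exact (mulg_lcancel m _ _ (E x)).
  - now rewrite E.
Qed.

End Group.

Arguments conjg {G} mul inv a x.

Ltac group_simpl HG Hpsi :=
  unfold conjg, nu, commutator, lam in *;
  repeat rewrite ?(mulA HG), ?(mul1g HG), ?(mulg1 HG), ?(mulgV HG),
    ?(mulVg HG), ?(mulKg HG), ?(mulVKg HG), ?(invMg HG), ?(invgK HG),
    ?(inv1g HG), ?Hpsi.

Section Endomorphism.
Context {G : Type} {mul : G -> G -> G} {one : G} {inv : G -> G}.
Hypothesis HG : is_group mul one inv.
Context {psi : G -> G}.
Hypothesis Hpsi : is_endo mul psi.

Local Notation "x ** y" := (mul x y) (at level 40, left associativity).

Lemma psi1 : psi one = one.
Proof.
  apply (mulg_lcancel HG (psi one)). now rewrite <- Hpsi, !(mulg1 HG).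
Qed.

Lemma psiV x : psi (inv x) = inv (psi x).
Proof. apply (inv_unique HG). now rewrite <- Hpsi, (mulgV HG), psi1. Qed.

Ltac simp := group_simpl HG Hpsi; rewrite ?psi1, ?psiV; group_simpl HG Hpsi.

(* Since the preimage under psi of the centre is a subgroup, psi maps the
   subgroup generated by T into Z(G) iff it maps T into Z(G). *)
Lemma psi_gen_central_iff (T : G -> Prop) :
  (forall x, gen mul one inv T x -> center mul (psi x)) <->
  (forall z, T z -> center mul (psi z)).
Proof.
  split.
  - intros H z Tz. apply H, gen_in, Tz.
  - intros H x Hx. induction Hx.
    + rewrite psi1. apply (center1 HG).
    + now apply H.
    + rewrite psiV. now apply (centerV HG).
    + rewrite Hpsi. now apply (centerM HG).
Qed.

Local Notation nu := (nu mul inv psi).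
Local Notation N := (Nset mul inv psi).
Local Notation circ := (circ_op mul inv psi).

(* Condition (1c):  psi([psi(G), G]) <= Z(G), on generators. *)
Definition psi_comm_psi_central : Prop :=
  forall g h, center mul (psi (commutator mul inv (psi g) h)).

(* Condition (2b):  psi([G, G]) <= Z(G), on generators. *)
Definition psi_comm_central : Prop :=
  forall g h, center mul (psi (commutator mul inv g h)).

Definition circ_assoc : Prop := forall g h x, nu g (nu h x) = nu (nu g h) x.

Lemma nu_conjg g x : nu g x = g ** conjg mul inv (psi g) x.
Proof. simp. reflexivity. Qed.

Lemma nu_one_r g : nu g one = g.
Proof. simp. reflexivity. Qed.

Lemma nu_one_l x : nu one x = x.
Proof. simp. reflexivity. Qed.

Definition nuinv (g x : G) : G := conjg mul inv (inv (psi g)) (inv g ** x).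

Lemma nu_nuinv g x : nu g (nuinv g x) = x.
Proof. unfold nuinv. simp. reflexivity. Qed.

Lemma nuinv_nu g x : nuinv g (nu g x) = x.
Proof. unfold nuinv. simp. reflexivity. Qed.

Lemma nu_bijective g : bijective_fun (nu g).
Proof. exists (nuinv g). split; intro x; [apply nuinv_nu | apply nu_nuinv]. Qed.

Lemma nu_inj g x y : nu g x = nu g y -> x = y.
Proof. intro E. now rewrite <- (nuinv_nu g x), E, nuinv_nu. Qed.

Lemma nu_shape_iff m c :
  (forall x, m ** conjg mul inv c x = nu m x) <-> center mul (inv c ** psi m).
Proof.
  rewrite <- (translate_conjg_iff HG m (psi m) c). split; intros E x.
  - now rewrite <- nu_conjg.
  - now rewrite nu_conjg.
Qed.

Lemma nu_comp g h x : nu g (nu h x) = nu g h ** conjg mul inv (psi g ** psi h) x.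
Proof. simp. reflexivity. Qed.

Lemma nu_comp_iff g h :
  (forall x, nu g (nu h x) = nu (nu g h) x) <->
  center mul (psi (commutator mul inv (psi g) h)).
Proof.
  setoid_rewrite nu_comp. rewrite nu_shape_iff.
  rewrite <- (center_conjg_iff HG (inv (psi h))
               (psi (commutator mul inv (psi g) h))).
  replace (conjg mul inv (inv (psi h)) (psi (commutator mul inv (psi g) h)))
    with (inv (psi g ** psi h) ** psi (nu g h)) by (simp; reflexivity).
  reflexivity.
Qed.

Lemma circ_assoc_iff : circ_assoc <-> psi_comm_psi_central.
Proof.
  split; intros H g h; [apply nu_comp_iff | apply (proj2 (nu_comp_iff g h))];
    intros; apply H.
Qed.

Lemma circ_is_group :
  circ_assoc -> is_group circ one (fun g => nuinv g one).
Proof.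
  intro HA. unfold circ_op. split; [|split].
  - intros x y z. apply HA.
  - intro x. split; [apply nu_one_l | apply nu_one_r].
  - intro g. split; [apply nu_nuinv|].
    apply (nu_inj g). now rewrite HA, nu_nuinv, nu_one_l, nu_one_r.
Qed.

(* N is a subgroup of Perm(G) iff o is associative: closure forces
   nu(g) nu(h) = nu(g o h) (compare values at 1), and conversely the inverse
   of nu(g) is nu of the o-inverse of g. *)
Lemma perm_subgroup_iff_assoc : is_perm_subgroup N <-> circ_assoc.
Proof.
  split.
  - intros [_ [_ [Hcomp _]]] g h x.
    destruct (Hcomp _ _ (ex_intro _ g eq_refl) (ex_intro _ h eq_refl)) as [k Hk].
    assert (Ek : k = nu g h).
    { now rewrite <- (nu_one_r k), <- Hk, nu_one_r. }
    subst k. exact (equal_f Hk x).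
  - intro HA. split; [|split; [|split]].
    + intros f [g ->]. apply nu_bijective.
    + exists one. extensionality x. now rewrite nu_one_l.
    + intros f f' [g ->] [h ->]. exists (nu g h). extensionality x. apply HA.
    + intros f [g ->] f' [Hl Hr]. exists (nuinv g one). extensionality x.
      assert (Ex : nu g (nu (nuinv g one) x) = x).
      { now rewrite HA, nu_nuinv, nu_one_l. }
      now rewrite <- Ex at 1; rewrite Hl.
Qed.

(* (G, ., o) is a skew brace iff o is associative: the brace identity
   g o (h k) = (g o h) g^-1 (g o k) holds for every psi. *)
Lemma skew_brace_iff_assoc : is_skew_brace mul circ <-> circ_assoc.
Proof.
  split.
  - intros [e [i [e' [i' [_ [[A _] _]]]]]]. exact A.
  - intro HA. exists one, inv, one, (fun g => nuinv g one).
    split; [exact HG | split; [now apply circ_is_group|]].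
    intros g h k. unfold circ_op. simp. reflexivity.
Qed.

Lemma perm_subgroup_iff_psi_comm : is_perm_subgroup N <-> psi_comm_psi_central.
Proof. exact (iff_trans perm_subgroup_iff_assoc circ_assoc_iff). Qed.

(* N is always regular: nu(g)(1) = g. *)
Lemma N_regular : is_regular one N.
Proof.
  split.
  - intros f f' [a ->] [b ->]. rewrite !nu_one_r. now intros ->.
  - intro x. exists (nu x). split; [now exists x | apply nu_one_r].
Qed.

(* N always normalises lambda(G):
   nu(k) lambda(g) nu(k)^-1 = lambda(k . c_{psi k}(g) . k^-1). *)
Lemma N_normalises_lambda : normalises_lambda mul N.
Proof.
  intros eta [k ->] eta' [Hl Hr].
  assert (Eeta' : eta' = nuinv k).
  { extensionality x. now rewrite <- (nu_nuinv k x) at 1; rewrite Hl. }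
  subst eta'. unfold nuinv. split.
  - intro g. exists (k ** conjg mul inv (psi k) g ** inv k).
    extensionality x. simp. reflexivity.
  - intro g'. exists (conjg mul inv (inv (psi k)) (inv k ** g' ** k)).
    extensionality x. simp. reflexivity.
Qed.

(* lambda(g) nu(k) lambda(g)^-1 is in N iff psi([k^-1, g][g, psi k]) is
   central; its candidate preimage is its value at 1. *)
Lemma lambda_conj_nu_iff g k :
  (fun x => lam mul g (nu k (lam mul (inv g) x))) = nu (g ** nu k (inv g)) <->
  center mul (psi (commutator mul inv (inv k) g ** commutator mul inv g (psi k))).
Proof.
  replace (psi (commutator mul inv (inv k) g ** commutator mul inv g (psi k)))
    with (inv (psi k) ** psi (g ** nu k (inv g))) by (simp; reflexivity).
  rewrite <- nu_shape_iff.
  assert (E : forall x, lam mul g (nu k (lam mul (inv g) x)) =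
                        (g ** nu k (inv g)) ** conjg mul inv (psi k) x)
    by (intro; simp; reflexivity).
  split.
  - intros Ef x. rewrite <- E. exact (equal_f Ef x).
  - intros Ex. extensionality x. now rewrite E.
Qed.

Lemma lambda_conj_nu_in_N g k :
  psi_comm_central -> N (fun x => lam mul g (nu k (lam mul (inv g) x))).
Proof.
  intro H2. exists (g ** nu k (inv g)). apply lambda_conj_nu_iff.
  rewrite Hpsi. apply (centerM HG); apply H2.
Qed.

Lemma normalised_by_lambda_iff :
  psi_comm_psi_central -> (normalised_by_lambda mul inv N <-> psi_comm_central).
Proof.
  intro H1. split.
  - intros HN g h.
    destruct (proj1 (HN h) (nu (inv g)) (ex_intro _ _ eq_refl)) as [m Hm].
    assert (Em : m = h ** nu (inv g) (inv h)).
    { rewrite <- (nu_one_r m), <- Hm. unfold lam. now rewrite (mulg1 HG). }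
    subst m. apply lambda_conj_nu_iff in Hm. rewrite (invgK HG) in Hm.
    replace (psi (commutator mul inv g h)) with
      (psi (commutator mul inv g h ** commutator mul inv h (psi (inv g))) **
       psi (commutator mul inv (psi (inv g)) h)) by (simp; reflexivity).
    apply (centerM HG); [exact Hm | apply H1].
  - intros H2 g. split.
    + intros eta [k ->]. now apply lambda_conj_nu_in_N.
    + intros eta' [k ->].
      exists (fun x => lam mul (inv g) (nu k (lam mul (inv (inv g)) x))).
      split; [now apply lambda_conj_nu_in_N|].
      extensionality x. simp. reflexivity.
Qed.

(* If gb is a left o-inverse of g, then  gb o (g . k) = c_{psi g}^-1(k),
   because  g . k = g o c_{psi g}^-1(k). *)
Lemma circ_left_inverse_dot gb g k :
  circ_assoc -> nu gb g = one -> nu gb (g ** k) = conjg mul inv (inv (psi g)) k.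
Proof.
  intros HA Hgb.
  replace (g ** k) with (nu g (conjg mul inv (inv (psi g)) k))
    by (simp; reflexivity).
  now rewrite HA, Hgb, nu_one_l.
Qed.

Lemma dot_brace_identity_iff gb g h :
  circ_assoc -> nu gb g = one ->
  (forall k, g ** nu h k = nu (nu (g ** h) gb) (g ** k)) <->
  center mul (psi (commutator mul inv g (inv h))).
Proof.
  intros HA Hgb.
  assert (E : forall k, nu (nu (g ** h) gb) (g ** k) =
      (g ** h) ** conjg mul inv (psi g ** psi h ** inv (psi g)) k).
  { intro k. rewrite <- HA, (circ_left_inverse_dot gb g k HA Hgb).
    simp. reflexivity. }
  assert (E' : forall k, g ** nu h k = (g ** h) ** conjg mul inv (psi h) k)
    by (intro; simp; reflexivity).
  setoid_rewrite E. setoid_rewrite E'.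
  replace (psi (commutator mul inv g (inv h))) with
    (inv (psi g ** psi h ** inv (psi g)) ** psi h) by (simp; reflexivity).
  exact (translate_conjg_iff HG _ _ _).
Qed.

Lemma bi_skew_brace_iff : is_bi_skew_brace mul circ <-> psi_comm_central.
Proof.
  split.
  - intros [S1 [e [i [e' [i' [[_ [He Hi]] [_ Hid]]]]]]] g h.
    apply skew_brace_iff_assoc in S1.
    assert (Ee : e = one) by (rewrite <- (nu_one_r e); apply (He one)).
    subst e. rewrite <- (invgK HG h).
    apply (dot_brace_identity_iff (i g) g (inv h) S1 (proj2 (Hi g))).
    intro k. apply Hid.
  - intro H2.
    assert (HA : circ_assoc) by (apply circ_assoc_iff; intros g h; apply H2).
    split; [now apply skew_brace_iff_assoc|].
    exists one, (fun g => nuinv g one), one, inv.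
    split; [now apply circ_is_group | split; [exact HG|]].
    intros g h k. unfold circ_op.
    apply (dot_brace_identity_iff (nuinv g one) g h HA).
    + apply (circ_is_group HA).
    + apply H2.
Qed.

Lemma psi_comm_psi_central_gen_iff :
  (forall x, comm_subgroup mul one inv (fun y => exists g, y = psi g)
               (fun _ => True) x -> center mul (psi x)) <-> psi_comm_psi_central.
Proof.
  unfold comm_subgroup. rewrite psi_gen_central_iff. split.
  - intros H g h. apply H. exists (psi g), h. repeat split. now exists g.
  - intros H z [a [b [[g ->] [_ ->]]]]. apply H.
Qed.

Lemma psi_comm_central_gen_iff :
  (forall x, comm_subgroup mul one inv (fun _ => True) (fun _ => True) x ->
     center mul (psi x)) <-> psi_comm_central.
Proof.
  unfold comm_subgroup. rewrite psi_gen_central_iff. split.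
  - intros H g h. apply H. now exists g, h.
  - intros H z [a [b [_ [_ ->]]]]. apply H.
Qed.

(* Part (2): (a) <-> (b).  Regularity and normalising lambda(G) are automatic,
   and (2b) implies (1c). *)
Lemma bi_normal_subgroup_iff :
  (is_perm_subgroup N /\ is_regular one N /\ normalises_lambda mul N /\
     normalised_by_lambda mul inv N) <-> psi_comm_central.
Proof.
  split.
  - intros [Hsub [_ [_ Hnb]]].
    exact (proj1 (normalised_by_lambda_iff
                    (proj1 perm_subgroup_iff_psi_comm Hsub)) Hnb).
  - intro H2. assert (H1 : psi_comm_psi_central) by (intros g h; apply H2).
    split; [now apply perm_subgroup_iff_psi_comm|].
    split; [exact N_regular|]. split; [exact N_normalises_lambda|].
    now apply normalised_by_lambda_iff.
Qed.

End Endomorphism.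

Arguments psi_comm_psi_central {G} mul inv psi.
Arguments psi_comm_central {G} mul inv psi.

Theorem theorem1p2 (G : Type) (mul : G -> G -> G) (one : G) (inv : G -> G)
  (HG : is_group mul one inv) (psi : G -> G) (Hpsi : is_endo mul psi) :
  let N := Nset mul inv psi in
  let circ := circ_op mul inv psi in
  let psiG := fun x => exists g, x = psi g in
  let allG := fun _ : G => True in
  (* part (1) *)
  ((is_perm_subgroup N <->
      (is_perm_subgroup N /\ is_regular one N /\ normalises_lambda mul N)) /\
   (is_perm_subgroup N <->
      (forall x, comm_subgroup mul one inv psiG allG x -> center mul (psi x))) /\
   (is_perm_subgroup N <-> is_skew_brace mul circ)) /\
  (* part (2) *)
  (((is_perm_subgroup N /\ is_regular one N /\ normalises_lambda mul N /\
       normalised_by_lambda mul inv N) <->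
      (forall x, comm_subgroup mul one inv allG allG x -> center mul (psi x))) /\
   ((is_perm_subgroup N /\ is_regular one N /\ normalises_lambda mul N /\
       normalised_by_lambda mul inv N) <-> is_bi_skew_brace mul circ)).
Proof.
  intros N circ psiG allG.
  assert (P1 := perm_subgroup_iff_psi_comm HG Hpsi).
  assert (P2 := bi_normal_subgroup_iff HG Hpsi).
  split; [split; [|split] | split].
  - split; [|now intros [Hsub _]].
    intro Hsub. exact (conj Hsub (conj (N_regular HG) (N_normalises_lambda HG))).
  - exact (iff_trans P1 (iff_sym (psi_comm_psi_central_gen_iff HG Hpsi))).
  - exact (iff_trans (perm_subgroup_iff_assoc HG Hpsi)
                     (iff_sym (skew_brace_iff_assoc HG Hpsi))).
  - exact (iff_trans P2 (iff_sym (psi_comm_central_gen_iff HG Hpsi))).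
  - exact (iff_trans P2 (iff_sym (bi_skew_brace_iff HG Hpsi))).
Qed.
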